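(* Let $c>0$ and let $r\geq1$ be an integer. If $N\geq 1$ and $r-1\leq c\log N$, then $$ \sum_{a\leq N^r}(\tau_r'(a))^2\leq\left(\frac{(1+c)^{r-1}}{(r-1)!}\,N(\log N)^{r-1}\right)^r. $$
   Context: $a$ runs over positive integers. $\tau_r'(a)$ is the number of ways to write $a$ as an ordered product of $r$ positive integers each of which does not exceed $N$. *)

From Stdlib Require Import Reals.
From mathcomp Require Import all_boot.

(* tau' N r a : number of ordered r-tuples (x_1,...,x_r) of positive integers
   with each x_i <= N and x_1 * ... * x_r = a.
   A tuple is encoded as f : 'I_r -> 'I_N, representing x_i = (f i) + 1. *)
Definition tau' (N r a : nat) : nat :=
  #|[set f : {ffun 'I_r -> 'I_N} | \prod_(i < r) (f i).+1 == a]|.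

Definition tau'_sq_sum (N r : nat) : nat :=
  \sum_(1 <= a < (N ^ r).+1) (tau' N r a) ^ 2.

(* Given x_1 ... x_r = y_1 ... y_r with all factors in [1, N], one can write
   x_i = prod_j z_ij and y_j = prod_i z_ij for an r x r matrix of positive integers z
   (split x_1 across the y_j by gcds and recurse). The pair (x, y) is then determined
   by the rows of z, each an r-tuple in [1, N] with product x_i <= N, so the sum is at
   most T^r where T counts such tuples. Splitting off the first coordinate gives
   T_(k+1)(n) = sum_(t <= n) T_k(n / t), and comparing sum_t 1/t phi(log n - log t)
   with the integral of phi yields T_(k+1)(n) <= n (log n + k)^k / k!. Finally
   log N + r - 1 <= (1 + c) log N. *)

From HB Require Import structures.
From Stdlib Require Import Reals Lra Psatz.
From mathcomp Require Import all_boot.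

Set Implicit Arguments.
Unset Strict Implicit.
Unset Printing Implicit Defensive.

Lemma dvdn_prod_ord n (F : 'I_n -> nat) j : F j %| \prod_(i < n) F i.
Proof. by rewrite (bigD1 j) //= dvdn_mulr. Qed.

Lemma dvdn_prod_split n a (y : 'I_n -> nat) :
  (forall j, 0 < y j) -> a %| \prod_(j < n) y j ->
  exists2 w : 'I_n -> nat, forall j, w j %| y j & \prod_(j < n) w j = a.
Proof.
elim: n a y => [|n IH] a y y_gt0.
  by rewrite big_ord0 dvdn1 => /eqP->; exists (fun=> 1) => [[]|]; rewrite ?big_ord0.
rewrite big_ord_recl => a_dvd.
pose g := gcdn a (y ord0).
have g_gt0 : 0 < g by rewrite gcdn_gt0 y_gt0 orbT.
have [w w_dvd prod_w] : exists2 w : 'I_n -> nat,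
    forall j, w j %| y (lift ord0 j) & \prod_(j < n) w j = a %/ g.
  apply: IH => [j|]; first exact: y_gt0.
  rewrite dvdn_divLR ?dvdn_gcdl //.
  by rewrite /g muln_gcdr dvdn_gcd dvdn_mull //= mulnC.
exists (fun j => if unlift ord0 j is Some j' then w j' else g).
  by move=> j; case: unliftP => [j' ->|->]; [exact: w_dvd | exact: dvdn_gcdr].
rewrite big_ord_recl unlift_none.
under eq_bigr => i _ do rewrite liftK.
by rewrite prod_w mulnC divnK ?dvdn_gcdl.
Qed.

Lemma prod_matrix_factorization m n (x : 'I_m -> nat) (y : 'I_n -> nat) :
  (forall i, 0 < x i) -> (forall j, 0 < y j) ->
  \prod_(i < m) x i = \prod_(j < n) y j ->
  exists2 z : 'I_m -> 'I_n -> nat,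
    forall i, \prod_(j < n) z i j = x i & forall j, \prod_(i < m) z i j = y j.
Proof.
elim: m x y => [|m IH] x y x_gt0 y_gt0 prod_xy.
  exists (fun _ _ => 0) => [[]//|j].
  rewrite big_ord0 in prod_xy; rewrite big_ord0.
  by apply/esym/eqP; rewrite -dvdn1 prod_xy dvdn_prod_ord.
have x0_dvd : x ord0 %| \prod_(j < n) y j by rewrite -prod_xy big_ord_recl dvdn_mulr.
have [w w_dvd prod_w] := dvdn_prod_split y_gt0 x0_dvd.
pose y' j := y j %/ w j.
have w_gt0 j : 0 < w j by apply: dvdn_gt0 (w_dvd j).
have prod_xy' : \prod_(i < m) x (lift ord0 i) = \prod_(j < n) y' j.
  apply/eqP; rewrite -(eqn_pmul2l (x_gt0 ord0)) -big_ord_recl prod_xy -prod_w.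
  by rewrite -big_split; apply/eqP/eq_bigr => j _ /=; rewrite mulnC divnK.
have y'_gt0 j : 0 < y' j by rewrite divn_gt0 // dvdn_leq.
have [z' prod_row prod_col] := IH _ y' (fun i => x_gt0 _) y'_gt0 prod_xy'.
exists (fun i j => if unlift ord0 i is Some i' then z' i' j else w j).
  by move=> i; case: unliftP => [i' ->|->].
move=> j; rewrite big_ord_recl unlift_none.
under eq_bigr => i _ do rewrite liftK.
by rewrite prod_col mulnC divnK.
Qed.

Definition tprod N k (f : {ffun 'I_k -> 'I_N}) := \prod_(i < k) (f i).+1.

Lemma card_set_sumE (T : finType) (P : pred T) : #|[set x | P x]| = \sum_x (P x : nat).
Proof. by rewrite -sum1dep_card big_mkcond; apply: eq_bigr => x _; case: (P x). Qed.

Lemma sum_eq_mul_eq_le (s : seq nat) x y :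
  uniq s -> \sum_(a <- s) ((x == a) * (y == a)) <= (x == y).
Proof.
move=> s_uniq; have [<-|x_neq_y] := eqVneq x y; last first.
  rewrite big1 // => a _; case: eqP => [<-|] //.
  by rewrite eq_sym (negbTE x_neq_y).
rewrite (eq_bigr (fun a => (x == a : nat))) => [|a _]; last by rewrite mulnb andbb.
rewrite -big_mkcond sum1_count (eq_count (a2 := pred1 x)) => [|a]; last exact: eq_sym.
by rewrite count_uniq_mem // leq_b1.
Qed.

Lemma tau'_sq_sum_le_pairs N r :
  tau'_sq_sum N r <= #|[set p : {ffun 'I_r -> 'I_N} * {ffun 'I_r -> 'I_N} |
                        tprod p.1 == tprod p.2]|.
Proof.
rewrite card_set_sumE -(pair_bigA _ (fun f g => (tprod f == tprod g : nat))) /=.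
rewrite /tau'_sq_sum (eq_bigr (fun a => \sum_(f : {ffun 'I_r -> 'I_N})
   \sum_(g : {ffun 'I_r -> 'I_N}) ((tprod f == a) * (tprod g == a)))) => [|a _]; last first.
  rewrite /tau' card_set_sumE -mulnn big_distrl /=.
  by apply: eq_bigr => f _; rewrite big_distrr.
rewrite exchange_big /=; apply: leq_sum => f _.
rewrite exchange_big /=; apply: leq_sum => g _.
exact/sum_eq_mul_eq_le/iota_uniq.
Qed.

Definition prod_le_set k N n := [set g : {ffun 'I_k -> 'I_N} | tprod g <= n].

Definition row_col_prods M r (Z : {ffun 'I_r -> {ffun 'I_r -> 'I_M.+1}}) :
    {ffun 'I_r -> 'I_M.+1} * {ffun 'I_r -> 'I_M.+1} :=
  ([ffun i => inord (\prod_(j < r) (Z i j).+1).-1],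
   [ffun j => inord (\prod_(i < r) (Z i j).+1).-1]).

Lemma card_eq_prod_pairs_le M r :
  #|[set p : {ffun 'I_r -> 'I_M.+1} * {ffun 'I_r -> 'I_M.+1} | tprod p.1 == tprod p.2]|
   <= #|prod_le_set r M.+1 M.+1| ^ r.
Proof.
set S := prod_le_set r M.+1 M.+1.
have -> : #|S| ^ r = #|@ffun_on 'I_r S| by rewrite card_ffun_on card_ord.
apply: leq_trans (leq_imset_card (@row_col_prods M r) _).
apply/subset_leq_card/subsetP => -[f g]; rewrite inE /= => /eqP prod_fg.
have [z prod_row prod_col] := prod_matrix_factorization (x := fun i => (f i).+1)
  (y := fun j => (g j).+1) (fun _ => erefl) (fun _ => erefl) prod_fg.
have z_dvd i j : z i j %| (f i).+1 by rewrite -prod_row dvdn_prod_ord.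
have z_gt0 i j : 0 < z i j by apply: dvdn_gt0 (z_dvd i j).
pose Z := [ffun i => [ffun j => (inord (z i j).-1 : 'I_M.+1)]].
have z_le i j : z i j <= M.+1 by apply: leq_trans (dvdn_leq _ (z_dvd i j)) _.
have ZE i j : (Z i j).+1 = z i j.
  by rewrite !ffunE inordK ?prednK // -ltnS prednK.
apply/imsetP; exists Z.
  apply/ffun_onP => i; rewrite inE /tprod.
  by under eq_bigr => j _ do rewrite ZE; rewrite prod_row ltn_ord.
by congr pair; apply/ffunP => i; rewrite ffunE;
  under eq_bigr => j _ do rewrite ZE; rewrite ?prod_row ?prod_col inord_val.
Qed.

Definition consf N k (t : 'I_N) (g : {ffun 'I_k -> 'I_N}) : {ffun 'I_k.+1 -> 'I_N} :=
  [ffun i => if unlift ord0 i is Some j then g j else t].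

Lemma tprod_consf N k t (g : {ffun 'I_k -> 'I_N}) : tprod (consf t g) = t.+1 * tprod g.
Proof.
rewrite /tprod big_ord_recl ffunE unlift_none; congr (_ * _).
by apply: eq_bigr => i _; rewrite ffunE liftK.
Qed.

Lemma sum_ffunS N k (F : {ffun 'I_k.+1 -> 'I_N} -> nat) :
  \sum_f F f = \sum_(t < N) \sum_(g : {ffun 'I_k -> 'I_N}) F (consf t g).
Proof.
rewrite pair_bigA /=.
have consf_bij : bijective (fun p : 'I_N * {ffun 'I_k -> 'I_N} => consf p.1 p.2).
  exists (fun f : {ffun 'I_k.+1 -> 'I_N} => (f ord0, [ffun j => f (lift ord0 j)])).
    move=> [t g] /=; rewrite ffunE unlift_none; congr pair.
    by apply/ffunP => j; rewrite !ffunE liftK.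
  move=> f; apply/ffunP => i; rewrite ffunE.
  by case: unliftP => [j ->|->]; rewrite ?ffunE.
by rewrite (reindex _ (onW_bij _ consf_bij)).
Qed.

Lemma card_prod_le_set_bound0 k N : #|prod_le_set k N 0| = 0.
Proof. by rewrite card_set_sumE big1 // => g _; rewrite leqNgt prodn_gt0. Qed.

Lemma card_prod_le_set_nil N n : #|prod_le_set 0 N n| = (0 < n).
Proof.
rewrite card_set_sumE (eq_bigr (fun=> (0 < n : nat))) => [|g _]; last first.
  by rewrite /tprod big_ord0.
by rewrite sum_nat_const card_ffun !card_ord mul1n.
Qed.

Lemma card_prod_le_setS k N n : n <= N ->
  #|prod_le_set k.+1 N n| = \sum_(t < n) #|prod_le_set k N (n %/ t.+1)|.
Proof.
move=> n_le_N; rewrite card_set_sumE sum_ffunS.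
rewrite (eq_bigr (fun t : 'I_N => #|prod_le_set k N (n %/ t.+1)|)) => [|t _]; last first.
  rewrite card_set_sumE; apply: eq_bigr => g _.
  by rewrite tprod_consf leq_divRL // mulnC.
rewrite (bigID (fun t : 'I_N => t < n)) /= (big_ord_narrow n_le_N).
rewrite [X in _ + X]big1 ?addn0 // => t; rewrite -leqNgt => n_le_t.
by rewrite divn_small ?card_prod_le_set_bound0.
Qed.

Local Open Scope R_scope.

HB.instance Definition _ := Monoid.isComLaw.Build R 0 Rplus
  (fun x y z => esym (Rplus_assoc x y z)) Rplus_comm Rplus_0_l.
HB.instance Definition _ := Monoid.isMulLaw.Build R 0 Rmult Rmult_0_l Rmult_0_r.
HB.instance Definition _ := Monoid.isAddLaw.Build R Rmult Rplus
  Rmult_plus_distr_r Rmult_plus_distr_l.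

Lemma pow_tangent_le k (U V : R) : 0 <= V -> V <= U ->
  V ^ k.+1 + INR k.+1 * (U - V) * V ^ k <= U ^ k.+1.
Proof.
move=> V_ge0 V_le_U; elim: k => [|k IH]; first by rewrite /=; lra.
have Vk_ge0 : 0 <= V ^ k by apply: pow_le.
have k_ge0 := pos_INR k.
rewrite !S_INR /= in IH *; set a := V ^ k in IH *; set b := U ^ k in IH *.
(* [U] times the induction hypothesis, plus the nonnegative defect [(k+1) (U-V)^2 V^k]. *)
have : 0 <= U * (U * b - (V * a + (INR k + 1) * (U - V) * a)).
  by apply: Rmult_le_pos; lra.
have : 0 <= (INR k + 1) * ((U - V) * (U - V) * a).
  by apply: Rmult_le_pos; [lra | apply: Rmult_le_pos => //; nra].
nra.
Qed.

Lemma ln_le x y : 0 < x -> x <= y -> ln x <= ln y.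
Proof. by move=> x_gt0 [x_lt_y | ->]; [left; apply: ln_increasing | right]. Qed.

Lemma ln_INR_ge0 n : (0 < n)%N -> 0 <= ln (INR n).
Proof. by move=> n_gt0; rewrite -ln_1; apply: ln_le; [lra | apply/(le_INR 1)/leP]. Qed.

Lemma inv_succ_le_ln_diff x : 0 < x -> / (x + 1) <= ln (x + 1) - ln x.
Proof.
move=> x_gt0; have := exp_ineq1_le (ln (x / (x + 1))).
rewrite exp_ln; last by apply: Rdiv_lt_0_compat; lra.
rewrite /Rdiv ln_mult ?ln_Rinv; try lra; last by apply: Rinv_0_lt_compat; lra.
have -> : x * / (x + 1) = 1 - / (x + 1) by field; lra.
lra.
Qed.

Lemma INR_fact_gt0 k : 0 < INR k`!.
Proof. exact/lt_0_INR/ltP/fact_gt0. Qed.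

Lemma INR_muln m n : INR (m * n) = INR m * INR n.
Proof. by rewrite mulnE mult_INR. Qed.

Lemma INR_expn m n : INR (m ^ n) = INR m ^ n.
Proof. by elim: n => [//|n IH]; rewrite expnS INR_muln IH. Qed.

Definition phi k u := (u + INR k) ^ k / INR k`!.
(* [Phi k] is an antiderivative of [phi k]. *)
Definition Phi k u := (u + INR k) ^ k.+1 / INR k.+1`!.

Lemma phi_ge0 k u : 0 <= u -> 0 <= phi k u.
Proof.
move=> u_ge0; have := pos_INR k; have := INR_fact_gt0 k => *.
by apply: Rmult_le_pos; [apply: pow_le; lra | left; apply: Rinv_0_lt_compat].
Qed.

Lemma phi_le k u v : 0 <= u -> u <= v -> phi k u <= phi k v.
Proof.
move=> u_ge0 u_le_v; have := pos_INR k; have := INR_fact_gt0 k => *.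
by apply: Rmult_le_compat_r; [left; apply: Rinv_0_lt_compat | apply: pow_incr; lra].
Qed.

Lemma Phi_ge0 k u : 0 <= u -> 0 <= Phi k u.
Proof.
move=> u_ge0; have := pos_INR k; have := INR_fact_gt0 k.+1 => *.
by apply: Rmult_le_pos; [apply: pow_le; lra | left; apply: Rinv_0_lt_compat].
Qed.

Lemma Phi_sub_ge k U V : 0 <= V -> V <= U -> (U - V) * phi k V <= Phi k U - Phi k V.
Proof.
move=> V_ge0 V_le_U; have k_ge0 := pos_INR k.
have F_gt0 := INR_fact_gt0 k; have K_gt0 : 0 < INR k.+1 by rewrite S_INR; lra.
set a := V + INR k; set b := U + INR k.
have tangent : a ^ k.+1 + INR k.+1 * (b - a) * a ^ k <= b ^ k.+1.
  by apply: pow_tangent_le; rewrite /a /b; lra.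
rewrite /phi /Phi -/a -/b factS INR_muln.
have -> : (U - V) * (a ^ k / INR k`!) =
  INR k.+1 * (b - a) * a ^ k * / (INR k.+1 * INR k`!) by rewrite /a /b; field; lra.
have -> : b ^ k.+1 / (INR k.+1 * INR k`!) - a ^ k.+1 / (INR k.+1 * INR k`!) =
  (b ^ k.+1 - a ^ k.+1) * / (INR k.+1 * INR k`!) by field; lra.
apply: Rmult_le_compat_r; last lra.
by left; apply/Rinv_0_lt_compat/Rmult_lt_0_compat.
Qed.

Lemma phi_add_Phi_le k u : 0 <= u -> phi k u + Phi k u <= phi k.+1 u.
Proof.
move=> u_ge0; have k_ge0 := pos_INR k.
have F_gt0 := INR_fact_gt0 k; have K_gt0 : 0 < INR k.+1 by rewrite S_INR; lra.
set a := u + INR k.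
have tangent : a ^ k.+1 + INR k.+1 * (a + 1 - a) * a ^ k <= (a + 1) ^ k.+1.
  by apply: pow_tangent_le; rewrite /a; lra.
rewrite /phi /Phi -/a.
have -> : u + INR k.+1 = a + 1 by rewrite /a S_INR; ring.
rewrite factS INR_muln.
have -> : a ^ k / INR k`! + a ^ k.+1 / (INR k.+1 * INR k`!) =
  (a ^ k.+1 + INR k.+1 * (a + 1 - a) * a ^ k) * / (INR k.+1 * INR k`!) by field; lra.
apply: Rmult_le_compat_r => //.
by left; apply/Rinv_0_lt_compat/Rmult_lt_0_compat.
Qed.

Lemma inv_phi_le_Phi_sub k L x : 0 < x -> ln (x + 1) <= L ->
  / (x + 1) * phi k (L - ln (x + 1)) <= Phi k (L - ln x) - Phi k (L - ln (x + 1)).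
Proof.
move=> x_gt0 lnx1_le_L; have gap := inv_succ_le_ln_diff x_gt0.
have lnx_le : ln x <= ln (x + 1) by apply: ln_le; lra.
apply: Rle_trans (_ : (ln (x + 1) - ln x) * phi k (L - ln (x + 1)) <= _).
  by apply: Rmult_le_compat_r => //; apply: phi_ge0; lra.
have -> : ln (x + 1) - ln x = L - ln x - (L - ln (x + 1)) by ring.
by apply: Phi_sub_ge; lra.
Qed.

Lemma INR_sum n (a : 'I_n -> nat) : INR (\sum_(t < n) a t) = \big[Rplus/0]_(t < n) INR (a t).
Proof. by apply: big_morph => [x y|]; rewrite ?addnE ?plus_INR. Qed.

Lemma Rsum_le n (F G : 'I_n -> R) :
  (forall t, F t <= G t) -> \big[Rplus/0]_(t < n) F t <= \big[Rplus/0]_(t < n) G t.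
Proof. by move=> FG; apply: (big_ind2 Rle) => *; [lra | exact: Rplus_le_compat | exact: FG]. Qed.

Lemma Rsum_distrr c n (F : 'I_n -> R) :
  c * \big[Rplus/0]_(t < n) F t = \big[Rplus/0]_(t < n) (c * F t).
Proof. by rewrite big_distrr. Qed.

Lemma Rsum_ord_recr n (F : nat -> R) :
  \big[Rplus/0]_(t < n.+1) F t = \big[Rplus/0]_(t < n) F t + F n.
Proof. by rewrite big_ord_recr. Qed.

Lemma sum_inv_phi_le k n : (0 < n)%N ->
  \big[Rplus/0]_(t < n) (/ INR t.+1 * phi k (ln (INR n) - ln (INR t.+1)))
    <= phi k.+1 (ln (INR n)).
Proof.
move=> n_gt0; set L := ln (INR n).
have L_ge0 : 0 <= L by exact: ln_INR_ge0.
pose term t := / INR t.+1 * phi k (L - ln (INR t.+1)).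
have telescope m : (m < n)%N ->
    \big[Rplus/0]_(t < m.+1) term t <= phi k L + Phi k L - Phi k (L - ln (INR m.+1)).
  elim: m => [|m IH] m_lt_n.
    by rewrite Rsum_ord_recr big_ord0 /term /= ln_1 Rminus_0_r Rinv_1; lra.
  rewrite Rsum_ord_recr.
  have step := @inv_phi_le_Phi_sub k L (INR m.+1) (lt_0_INR _ (ltP (ltn0Sn m))).
  rewrite -S_INR in step.
  have ln_le_L : ln (INR m.+2) <= L by apply: ln_le; [apply/lt_0_INR/ltP | apply/le_INR/leP].
  by have := IH (ltnW m_lt_n); have := step ln_le_L; rewrite /term; lra.
have := telescope n.-1; rewrite ltn_predL prednK // -/L Rminus_diag => /(_ n_gt0) tele.
apply: (Rle_trans _ _ _ tele).
by have := Phi_ge0 k (Rle_refl 0); have := phi_add_Phi_le k L_ge0; lra.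
Qed.

Lemma phi_ln_div_le k m d n : (0 < m)%N -> (0 < d)%N -> (m * d <= n)%N ->
  INR m * phi k (ln (INR m)) <= INR n * (/ INR d * phi k (ln (INR n) - ln (INR d))).
Proof.
move=> m_gt0 d_gt0 md_le_n.
have m_pos : 0 < INR m by apply/lt_0_INR/ltP.
have d_pos : 0 < INR d by apply/lt_0_INR/ltP.
have md_le : INR m * INR d <= INR n by rewrite -INR_muln; apply/le_INR/leP.
have ln_m_le : ln (INR m) <= ln (INR n) - ln (INR d).
  have := ln_le (Rmult_lt_0_compat _ _ m_pos d_pos) md_le; rewrite ln_mult //; lra.
rewrite -Rmult_assoc; apply: Rmult_le_compat.
- exact: pos_INR.
- exact/phi_ge0/ln_INR_ge0.
- by apply: (Rmult_le_reg_r (INR d)) => //; rewrite Rmult_assoc Rinv_l; lra.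
- exact/phi_le/ln_m_le/ln_INR_ge0.
Qed.

Lemma card_prod_le_set_le_phi k N n : (0 < n)%N -> (n <= N)%N ->
  INR #|prod_le_set k.+1 N n| <= INR n * phi k (ln (INR n)).
Proof.
elim: k n => [|k IH] n n_gt0 n_le_N; rewrite card_prod_le_setS //.
  rewrite /phi /= Rdiv_1_r Rmult_1_r; apply/le_INR/leP.
  rewrite -[X in (_ <= X)%N](card_ord n) -sum1_card.
  by apply: leq_sum => t _; rewrite card_prod_le_set_nil leq_b1.
rewrite INR_sum; apply: Rle_trans (_ : _ <= INR n * \big[Rplus/0]_(t < n)
    (/ INR t.+1 * phi k (ln (INR n) - ln (INR t.+1)))) _; last first.
  exact/Rmult_le_compat_l/sum_inv_phi_le/n_gt0/pos_INR.
rewrite Rsum_distrr; apply: Rsum_le => t.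
have m_gt0 : (0 < n %/ t.+1)%N by rewrite divn_gt0 // ltnS ltnW.
apply: Rle_trans (IH _ m_gt0 (leq_trans (leq_div _ _) n_le_N)) _.
by apply: phi_ln_div_le => //; apply: leq_trunc_div.
Qed.

Lemma phi_le_pow_mul k c L : 0 <= c -> 0 <= L -> INR k <= c * L ->
  phi k L <= (1 + c) ^ k / INR k`! * L ^ k.
Proof.
move=> c_ge0 L_ge0 k_le; have := pos_INR k; have := INR_fact_gt0 k => F_gt0 k_ge0.
rewrite /phi /Rdiv Rmult_assoc [/ _ * _]Rmult_comm -Rmult_assoc -Rpow_mult_distr.
by apply: Rmult_le_compat_r; [left; apply: Rinv_0_lt_compat | apply: pow_incr; nra].
Qed.

Theorem corollary2p2 (c : R) (r N : nat) :
  0 < c -> (1 <= r)%N -> (1 <= N)%N ->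
  INR (r - 1)%N <= c * ln (INR N) ->
  INR (tau'_sq_sum N r) <=
     ((1 + c) ^ (r - 1)%N / INR (r - 1)`! * INR N * (ln (INR N)) ^ (r - 1)%N) ^ r.
Proof.
case: r => [//|s]; case: N => [//|M] c_gt0 _ _; rewrite subSS subn0 => s_le.
have L_ge0 := ln_INR_ge0 (ltn0Sn M).
apply: Rle_trans (_ : INR (#|prod_le_set s.+1 M.+1 M.+1| ^ s.+1) <= _).
  exact/le_INR/leP/(leq_trans (tau'_sq_sum_le_pairs _ _))/card_eq_prod_pairs_le.
rewrite INR_expn; apply: pow_incr; split; first exact: pos_INR.
apply: Rle_trans (card_prod_le_set_le_phi s (ltn0Sn M) (leqnn _)) _.
rewrite (Rmult_comm _ (INR M.+1)) Rmult_assoc.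
by apply: Rmult_le_compat_l; [exact: pos_INR | apply: phi_le_pow_mul; lra].
Qed.
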